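(* A $3$-cochain $f\in\mathrm{Hom}_{\mathbb{Z}G}(K_3,\mathbb{k}^* )$ is a coboundary if and only if: - for all $1\le i<j\le k$ there exist $g_{i,j}\in\mathbb{k}^*$ with $f_{i,i,j}=g_{i,j}^{m_i}$ and $f_{i,j,j}=g_{i,j}^{-m_j}$; - $f_{l,l,l}=1$ for all $1\le l\le k$; - $f_{r,s,t}=1$ for all $1\le r<s<t\le k$.
   Context: Let $\mathbb{k}$ be a field and $\mathbb{k}^*$ its multiplicative group, regarded as a trivial $G$-module, where $G=\mathbb{Z}_{m_1}\times\cdots\times\mathbb{Z}_{m_k}$ with fixed generator $g_i$ of the $i$-th factor. Put $T_i=g_i-1$ and $N_i=\sum_{j=0}^{m_i-1}g_i^j$. $K_\bullet$ is the free $\mathbb{Z}G$-resolution of $\mathbb{Z}$ with $K_p$ free on generators $\Psi(a_1,\dots,a_k)$, $a_i\ge0$, $\sum a_i=p$. Its differential is $d=\sum_i d_i$, where $d_i\Psi(a)$ equals: - $0$ if $a_i=0$; - $(-1)^{\sum_{l<i}a_l}N_i\Psi(a-\epsilon_i)$ if $a_i\ne0$ is even; - $(-1)^{\sum_{l<i}a_l}T_i\Psi(a-\epsilon_i)$ if $a_i$ is odd. Cochains are $\mathrm{Hom}_{\mathbb{Z}G}(K_\bullet,\mathbb{k}^* )$ with $d^*f=f\circ d$ (written multiplicatively); $f$ is a coboundary if $f=d^*g$ for some $g\in\mathrm{Hom}_{\mathbb{Z}G}(K_2,\mathbb{k}^* )$. Notation for generators of $K_3$: $\Psi_{r,s,t}$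 ($r<s<t$) has entry $1$ in positions $r,s,t$; $\Psi_{r,r,s}$ ($r<s$) has $2$ in position $r$ and $1$ in position $s$; $\Psi_{r,s,s}$ ($r<s$) has $1$ in position $r$ and $2$ in position $s$; $\Psi_{r,r,r}$ has $3$ in position $r$; all other entries are $0$. $f_{r,s,t}$ etc. denote the values of $f$ on these generators. *)

From mathcomp Require Import all_boot all_order all_algebra.
Set Implicit Arguments. Unset Strict Implicit. Unset Printing Implicit Defensive.
Import Order.TTheory GRing.Theory Num.Theory.
Local Open Scope ring_scope.

(* G = Z_{m_1} x ... x Z_{m_k}; positions 1..k are indexed by 'I_k (0-based).
   An element of G is written g_1^{e_1} ... g_k^{e_k} and represented by its
   exponent vector (exponents are only meaningful mod m_i; since k^* is a
   trivial G-module this plays no role). *)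
Definition grp (k : nat) := {ffun 'I_k -> nat}.

Definition gpow (k : nat) (i : 'I_k) (j : nat) : grp k :=
  [ffun l => if l == i then j else 0%N].

(* elements of ZG as formal Z-linear combinations of group elements *)
Definition ZG (k : nat) := seq (int * grp k).

Definition Tel (k : nat) (i : 'I_k) : ZG k := [:: (1%Z, gpow i 1); (-1%Z, gpow i 0)].
Definition Nel (k : nat) (m : 'I_k -> nat) (i : 'I_k) : ZG k :=
  [seq (1%Z, gpow i j) | j <- iota 0 (m i)].
Definition ZGscale (k : nat) (c : int) (x : ZG k) : ZG k :=
  [seq (c * y.1, y.2) | y <- x].

(* Generators Psi(a_1,...,a_k) of K_p, indexed by the exponent tuple a
   (those with \sum a = p belong to K_p). *)
Definition idx (k : nat) := {ffun 'I_k -> nat}.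
Definition deg (k : nat) (a : idx k) : nat := (\sum_(i < k) a i)%N.

(* A p-cochain in Hom_{ZG}(K_p, k^* ) : since K_p is free on the Psi(a),
   it is given by its values on the generators, which lie in k^*. *)
Definition is_cochain (F : fieldType) (k p : nat) (f : idx k -> F) : Prop :=
  forall a : idx k, deg a = p -> f a != 0.

Definition act (F : fieldType) (k : nat) (h : grp k) (u : F) : F := u.

(* value of the ZG-hom f (into the trivial module k^*, written multiplicatively)
   on the element x . Psi(b) of the free module *)
Definition evalZG (F : fieldType) (k : nat) (f : idx k -> F) (x : ZG k) (b : idx k) : F :=
  \prod_(c <- x) (act c.2 (f b)) ^ c.1.

Definition decr (k : nat) (a : idx k) (i : 'I_k) : idx k :=
  [ffun l => if l == i then (a l).-1 else a l].

(* d_i Psi(a) = (coefficient in ZG, generator) *)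
Definition dcoef (k : nat) (m : 'I_k -> nat) (a : idx k) (i : 'I_k) : ZG k :=
  let s := (\sum_(l < k | (l < i)%N) a l)%N in
  if a i == 0%N then [::]
  else if ~~ odd (a i) then ZGscale ((-1) ^+ s) (Nel m i)
  else ZGscale ((-1) ^+ s) (Tel i).

Definition dstar (F : fieldType) (k : nat) (m : 'I_k -> nat) (g : idx k -> F) (a : idx k) : F :=
  \prod_(i < k) evalZG g (dcoef m a i) (decr a i).

Definition coboundary3 (F : fieldType) (k : nat) (m : 'I_k -> nat) (f : idx k -> F) : Prop :=
  exists g : idx k -> F, is_cochain 2 g /\
    forall a : idx k, deg a = 3%N -> f a = dstar m g a.

(* the generator with entry l equal to the number of occurrences of l among r,s,t:
   psi3 r s t = Psi_{r,s,t}, psi3 r r s = Psi_{r,r,s}, psi3 r s s = Psi_{r,s,s},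
   psi3 r r r = Psi_{r,r,r} *)
Definition psi3 (k : nat) (r s t : 'I_k) : idx k :=
  [ffun l => count (pred1 l) [:: r; s; t]].

From mathcomp Require Import all_boot all_order all_algebra.
Import GRing.Theory.
Local Open Scope ring_scope.

(* Since k^* is a trivial G-module, T_i acts as 0 and N_i as multiplication by
   m_i, so (d^* g)(Psi(a)) only picks up the factors g(a - e_i)^(+-m_i) with
   a_i = 2.  On a degree-3 generator this leaves nothing for Psi_{l,l,l} and
   Psi_{r,s,t}, the single factor g(Psi_{i,j})^(m_i) for Psi_{i,i,j}, and
   g(Psi_{i,j})^(-m_j) for Psi_{i,j,j}, the sign coming from the one index
   before j.  Conversely, given the values g_{i,j}, the 2-cochain with
   g(Psi_{i,j}) = g_{i,j} has coboundary f, as every degree-3 generator is of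
   one of these four shapes. *)

Section Coboundaries.
Variables (F : fieldType) (k : nat) (m : 'I_k -> nat).

Definition mset_idx (s : seq 'I_k) : idx k := [ffun l => count (pred1 l) s].

Lemma perm_mset_idxP (s t : seq 'I_k) :
  reflect (mset_idx s = mset_idx t) (perm_eq s t).
Proof.
apply: (iffP idP) => [/permP st|st]; first by apply/ffunP => l; rewrite !ffunE.
apply/allP => x _; apply/eqP.
by have := congr1 (fun a : idx k => a x) st; rewrite !ffunE.
Qed.

Lemma deg_mset_idx (s : seq 'I_k) : deg (mset_idx s) = size s.
Proof.
rewrite /deg; elim: s => [|x s IH] /=; first by rewrite big1 // => l _; rewrite ffunE.
rewrite -IH -add1n (bigD1 x) //= [in RHS](bigD1 x) //= !ffunE /= eqxx addnA.
by congr (_ + _)%N; apply: eq_bigr => l lx; rewrite !ffunE /= eq_sym (negbTE lx).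
Qed.

Lemma deg_psi3 (r s t : 'I_k) : deg (psi3 r s t) = 3%N.
Proof. exact: deg_mset_idx. Qed.

Lemma decr_mset_idx_cons (i : 'I_k) (s : seq 'I_k) :
  decr (mset_idx (i :: s)) i = mset_idx s.
Proof.
apply/ffunP => l; rewrite !ffunE /=.
by case: (l =P i) => [->|/eqP li]; rewrite ?eqxx // eq_sym (negbTE li).
Qed.

Lemma le_deg (a : idx k) (i : 'I_k) : (a i <= deg a)%N.
Proof. by rewrite /deg (bigD1 i) //= leq_addr. Qed.

Lemma deg_decr (a : idx k) (i : 'I_k) : a i != 0%N -> deg (decr a i) = (deg a).-1.
Proof.
move=> ai; rewrite /deg (bigD1 i) //= [in RHS](bigD1 i) //= ffunE eqxx.
rewrite (eq_bigr a); last by move=> l /negbTE li; rewrite ffunE li.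
by case: (a i) ai.
Qed.

Lemma mset_idx_of_deg (a : idx k) : exists2 s, size s = deg a & a = mset_idx s.
Proof.
suff: forall n a, deg a = n -> exists2 s, size s = n & a = mset_idx s by apply.
elim=> [|n IH] {}a da.
  exists [::] => //; apply/ffunP => l; rewrite ffunE.
  by apply/eqP; move: da => /eqP; rewrite sum_nat_eq0 => /forallP /(_ l).
have [i ai] : exists i, a i != 0%N.
  apply/existsP; rewrite -negb_forall; apply/negP => /forallP a0.
  by move: da; rewrite /deg big1 // => l _; apply/eqP; apply: a0.
have [s ss Es] : exists2 s, size s = n & decr a i = mset_idx s.
  by apply: IH; rewrite deg_decr // da.
exists (i :: s); first by rewrite /= ss.
apply/ffunP => l; have := congr1 (fun b : idx k => b l) Es; rewrite !ffunE /= => <-.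
case: (l =P i) => [->|/eqP li]; first by rewrite eqxx add1n prednK // lt0n.
by rewrite eq_sym (negbTE li).
Qed.

Lemma deg3_psi3 (a : idx k) : deg a = 3%N ->
  exists r s t : 'I_k, [/\ (r <= s)%N, (s <= t)%N & a = psi3 r s t].
Proof.
move=> da; have [s] := mset_idx_of_deg a; rewrite da => ss ->.
pose le := fun x y : 'I_k => (x <= y)%N.
have := sort_sorted (fun x y : 'I_k => leq_total x y) s.
have := size_sort le s; have := perm_sort le s.
case: (sort le s) => [|r [|u [|t [|? ?]]]] //= perm_s; rewrite ss // => _.
case/and3P=> ru ut _; exists r, u, t; split => //.
by apply/perm_mset_idxP; rewrite perm_sym perm_s.
Qed.

Lemma mset_idx_pair_inj (i j i' j' : 'I_k) : (i < j)%N -> (i' < j')%N ->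
  mset_idx [:: i; j] = mset_idx [:: i'; j'] -> i = i' /\ j = j'.
Proof.
move=> ij ij' /perm_mset_idxP eq_ij; pose le := fun x y : 'I_k => (x <= y)%N.
have le_trans : transitive le by move=> ? ? ?; exact: leq_trans.
have le_anti : antisymmetric le by move=> x y /anti_leq /val_inj.
have sorted2 (x y : 'I_k) : (x < y)%N -> sorted le [:: x; y].
  by move=> xy; rewrite /= andbT; exact: ltnW.
have := sorted_eq le_trans le_anti (sorted2 _ _ ij) (sorted2 _ _ ij') eq_ij.
by case=> -> ->.
Qed.

Lemma sum_lt_mset_idx (s : seq 'I_k) (i : 'I_k) :
  (\sum_(l < k | (l < i)%N) mset_idx s l)%N = count (fun x : 'I_k => (x < i)%N) s.
Proof.
elim: s => [|x s IH] /=; first by rewrite big1 // => l _; rewrite ffunE.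
rewrite -IH (eq_bigr (fun l => (x == l) + mset_idx s l)%N) => [|l _]; last first.
  by rewrite !ffunE.
rewrite big_split /=; congr (_ + _)%N; case: (ltnP x i) => xi.
  rewrite (bigD1 x) //= eqxx big1 // => l /andP [_ /negbTE].
  by rewrite eq_sym => ->.
by rewrite big1 // => l li; case: eqP => // xl; move: xi; rewrite xl leqNgt li.
Qed.

Definition sgn (a : idx k) (i : 'I_k) : int :=
  (-1) ^+ (\sum_(l < k | (l < i)%N) a l)%N.

Lemma evalZG_Tel (g : idx k -> F) (c : int) (i : 'I_k) (b : idx k) :
  g b != 0 -> evalZG g (ZGscale c (Tel i)) b = 1.
Proof.
move=> gb; rewrite /evalZG /ZGscale /Tel /= !big_cons big_nil /act /= mulr1.
by rewrite -expfzDr // mulr1 mulrN1 subrr expr0z.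
Qed.

Lemma evalZG_Nel (g : idx k -> F) (c : int) (i : 'I_k) (b : idx k) :
  evalZG g (ZGscale c (Nel m i)) b = (g b ^ c) ^+ m i.
Proof.
rewrite /evalZG /ZGscale /Nel -map_comp big_map /act /=.
rewrite (eq_bigr (fun _ => g b ^ c)) => [|j _]; last by rewrite mulr1.
by have := prodr_const_nat 0 (m i) (g b ^ c); rewrite /index_iota !subn0.
Qed.

Lemma evalZG_dcoef (g : idx k -> F) (a : idx k) (i : 'I_k) :
  (a i != 0%N -> g (decr a i) != 0) ->
  evalZG g (dcoef m a i) (decr a i) =
  if (a i != 0%N) && ~~ odd (a i) then (g (decr a i) ^ sgn a i) ^+ m i else 1.
Proof.
rewrite /dcoef; case: eqP => [_ _|/eqP ai0 g_ne0] /=; first by rewrite /evalZG big_nil.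
by case: ifP => _; rewrite ?evalZG_Nel // evalZG_Tel // g_ne0.
Qed.

Lemma dstar_deg3 (g : idx k -> F) (a : idx k) : is_cochain 2 g -> deg a = 3%N ->
  dstar m g a =
  \prod_(i < k) if a i == 2%N then (g (decr a i) ^ sgn a i) ^+ m i else 1.
Proof.
move=> cg da; apply: eq_bigr => i _; rewrite evalZG_dcoef => [|ai].
  by have := le_deg a i; rewrite da; case: (a i) => [|[|[|[|]]]].
by apply: cg; rewrite deg_decr // da.
Qed.

Lemma dstar_psi3_iij (g : idx k -> F) (i j : 'I_k) : (i < j)%N -> is_cochain 2 g ->
  dstar m g (psi3 i i j) = g (mset_idx [:: i; j]) ^+ m i.
Proof.
move=> ij cg; have ji : (j == i) = false by apply: gtn_eqF.
rewrite dstar_deg3 ?deg_psi3 // (bigD1 i) //= big1 => [|l /negbTE li].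
  rewrite ffunE /= eqxx ji decr_mset_idx_cons /sgn sum_lt_mset_idx /=.
  by rewrite ltnn ltnNge ltnW // expr1z mulr1.
by rewrite ffunE /= (eq_sym i l) li; case: (j == l).
Qed.

Lemma dstar_psi3_ijj (g : idx k -> F) (i j : 'I_k) : (i < j)%N -> is_cochain 2 g ->
  dstar m g (psi3 i j j) = g (mset_idx [:: i; j]) ^ (- (m j)%:Z).
Proof.
move=> ij cg; have ij' : (i == j) = false by apply: ltn_eqF.
have -> : psi3 i j j = mset_idx [:: j; i; j].
  by apply/perm_mset_idxP/permP => p /=; rewrite addnCA.
rewrite dstar_deg3 ?deg_mset_idx // (bigD1 j) //= big1 => [|l /negbTE li].
  rewrite ffunE /= eqxx ij' decr_mset_idx_cons /sgn sum_lt_mset_idx /=.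
  by rewrite ltnn ij expr1 exprN1 exprVn exprnN mulr1.
by rewrite ffunE /= (eq_sym j l) li; case: (i == l).
Qed.

Lemma dstar_psi3_lll (g : idx k -> F) (l : 'I_k) : is_cochain 2 g ->
  dstar m g (psi3 l l l) = 1.
Proof.
move=> cg; rewrite dstar_deg3 ?deg_psi3 // big1 // => i _.
by rewrite ffunE /=; case: (l == i).
Qed.

Lemma dstar_psi3_rst (g : idx k -> F) (r s t : 'I_k) :
  (r < s)%N -> (s < t)%N -> is_cochain 2 g -> dstar m g (psi3 r s t) = 1.
Proof.
move=> rs st cg; have rt := ltn_trans rs st.
have [sr tr ts] : [/\ (s == r) = false, (t == r) = false & (t == s) = false].
  by split; apply: gtn_eqF.
rewrite dstar_deg3 ?deg_psi3 // big1 // => i _; rewrite ffunE /=.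
case: (r =P i) => [<-|_]; first by rewrite sr tr.
by case: (s =P i) => [<-|_]; [rewrite ts | case: (t == i)].
Qed.

Variable f : idx k -> F.

Lemma coboundary3_psi3 :
  coboundary3 m f ->
  [/\ (forall i j : 'I_k, (i < j)%N ->
         exists2 g : F, g != 0 &
           f (psi3 i i j) = g ^+ m i /\ f (psi3 i j j) = g ^ (- (m j)%:Z)),
      (forall l : 'I_k, f (psi3 l l l) = 1) &
      (forall r s t : 'I_k, (r < s)%N -> (s < t)%N -> f (psi3 r s t) = 1)].
Proof.
case=> g [cg fE]; split=> [i j ij|l|r s t rs st]; rewrite ?fE ?deg_psi3 //.
- exists (g (mset_idx [:: i; j])); first by apply: cg; rewrite deg_mset_idx.
  by rewrite dstar_psi3_iij ?dstar_psi3_ijj.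
- exact: dstar_psi3_lll.
- exact: dstar_psi3_rst.
Qed.

Definition pair_cochain (G : 'I_k -> 'I_k -> F) (b : idx k) : F :=
  if [pick ij : 'I_k * 'I_k | (ij.1 < ij.2)%N && (b == mset_idx [:: ij.1; ij.2])]
    is Some ij then G ij.1 ij.2 else 1.

Lemma pair_cochainE (G : 'I_k -> 'I_k -> F) (i j : 'I_k) :
  (i < j)%N -> pair_cochain G (mset_idx [:: i; j]) = G i j.
Proof.
move=> ij; rewrite /pair_cochain; case: pickP => [[i' j'] /andP [/= ij' /eqP E]|].
  by have [-> ->] := mset_idx_pair_inj _ _ _ _ ij ij' E.
by move=> /(_ (i, j)); rewrite /= ij eqxx.
Qed.

Lemma pair_cochain_cochain (G : 'I_k -> 'I_k -> F) :
  (forall i j : 'I_k, (i < j)%N -> G i j != 0) -> is_cochain 2 (pair_cochain G).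
Proof.
move=> G_ne0 b _; rewrite /pair_cochain.
by case: pickP => [[i j] /andP [/= /G_ne0]|_] //; exact: oner_neq0.
Qed.

Lemma coboundary3_of_sorted_psi3 (g : idx k -> F) : is_cochain 2 g ->
  (forall r s t : 'I_k, (r <= s)%N -> (s <= t)%N ->
     f (psi3 r s t) = dstar m g (psi3 r s t)) ->
  coboundary3 m f.
Proof.
move=> cg fE; exists g; split=> // a /deg3_psi3 [r [s [t [rs st ->]]]].
exact: fE.
Qed.

Lemma coboundary3_of_psi3 :
  (forall i j : 'I_k, (i < j)%N ->
     exists2 g : F, g != 0 &
       f (psi3 i i j) = g ^+ m i /\ f (psi3 i j j) = g ^ (- (m j)%:Z)) ->
  (forall l : 'I_k, f (psi3 l l l) = 1) ->
  (forall r s t : 'I_k, (r < s)%N -> (s < t)%N -> f (psi3 r s t) = 1) ->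
  coboundary3 m f.
Proof.
move=> f_iij f_lll f_rst.
pose P (i j : 'I_k) (g : F) := (i < j)%N ==>
  [&& g != 0, f (psi3 i i j) == g ^+ m i & f (psi3 i j j) == g ^ (- (m j)%:Z)].
have exP i j : exists g, P i j g.
  case: (ltnP i j) => [ij|ji]; last by exists 1; rewrite /P ltnNge ji.
  have [g g_ne0 [f_ij f_jj]] := f_iij i j ij.
  by exists g; rewrite /P g_ne0 f_ij f_jj !eqxx implybT.
pose G i j := xchoose (exP i j).
have GP (i j : 'I_k) : (i < j)%N -> [&& G i j != 0, f (psi3 i i j) == G i j ^+ m i &
    f (psi3 i j j) == G i j ^ (- (m j)%:Z)].
  by move=> ij; apply: (implyP (xchooseP (exP i j))).
have cg : is_cochain 2 (pair_cochain G).
  by apply: pair_cochain_cochain => i j /GP /and3P [].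
apply: (coboundary3_of_sorted_psi3 _ cg) => r s t.
rewrite [(r <= s)%N]leq_eqVlt [(s <= t)%N]leq_eqVlt.
move=> /orP [/eqP/val_inj <-|rs] /orP [/eqP/val_inj <-|st].
- by rewrite f_lll dstar_psi3_lll.
- by case/and3P: (GP r t st) => _ /eqP -> _; rewrite dstar_psi3_iij // pair_cochainE.
- by case/and3P: (GP r s rs) => _ _ /eqP ->; rewrite dstar_psi3_ijj // pair_cochainE.
- by rewrite f_rst // dstar_psi3_rst.
Qed.

End Coboundaries.

Theorem lemma2p9 (F : fieldType) (k : nat) (m : 'I_k -> nat)
  (Hm : forall i, (0 < m i)%N) (f : idx k -> F) (Hf : is_cochain 3 f) :
  coboundary3 m f <->
  [/\ (forall i j : 'I_k, (i < j)%N ->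
         exists2 g : F, g != 0 &
           f (psi3 i i j) = g ^+ m i /\ f (psi3 i j j) = g ^ (- (m j)%:Z)),
      (forall l : 'I_k, f (psi3 l l l) = 1) &
      (forall r s t : 'I_k, (r < s)%N -> (s < t)%N -> f (psi3 r s t) = 1)].
Proof.
split; first exact: coboundary3_psi3.
by case; exact: coboundary3_of_psi3.
Qed.
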